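(* Let $(P,\le,\mu,\gamma)$ be a preordered heap with target multiplication $\tau(a,b)=\gamma(\mu(\gamma a,\gamma b))$. If $e\in P$ is a left identity or a right identity for $\mu$ (i.e. $\mu(e,a)\simeq a$ for all $a\in P$, or $\mu(a,e)\simeq a$ for all $a\in P$), then $e$ is a double-sided identity for $\mu$ (i.e. $\mu(e,a)\simeq a\simeq\mu(a,e)$ for all $a$) and $\gamma e$ is a double-sided identity for $\tau$ (i.e. $\tau(\gamma e,a)\simeq a\simeq\tau(a,\gamma e)$ for all $a$). Analogously, if $e\in P$ is a left or right identity for $\tau$, then $e$ is a double-sided identity for $\tau$ and $\gamma e$ is a double-sided identity for $\mu$.
   Context: A preordered heap is a structure $(P,\le,\mu,\gamma)$ where $(P,\le)$ is a preorder (reflexive and transitive relation); $\mu\colon P\times P\to P$ (source multiplication) is monotonic in both arguments; $\gamma\colon P\to P$ (involution) is antitone ($a\le b\Rightarrow \gamma b\le\gamma a$); and the following axioms hold: (A1) $\gamma(\gamma(a))=a$ for all $a$; (A2a) $\mu(a,\gamma(\mu(\gamma b,a)))\le b$ for all $a,b\in P$; (A2b) $\mu(\gamma(\mu(a,\gamma b)),a)\le b$ for all $a,b\in P$. For $a,b\in P$, $a\simeq b$ means $a\le b$ and $b\le a$. *)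

Record preordered_heap (P : Type) (le : P -> P -> Prop) (mu : P -> P -> P) (gamma : P -> P) : Prop := {
  ph_refl : forall a, le a a;
  ph_trans : forall a b c, le a b -> le b c -> le a c;
  ph_mu_mono : forall a a' b b', le a a' -> le b b' -> le (mu a b) (mu a' b');
  ph_gamma_anti : forall a b, le a b -> le (gamma b) (gamma a);
  ph_A1 : forall a, gamma (gamma a) = a;
  ph_A2a : forall a b, le (mu a (gamma (mu (gamma b) a))) b;
  ph_A2b : forall a b, le (mu (gamma (mu a (gamma b))) a) b
}.

Definition equiv {P : Type} (le : P -> P -> Prop) (a b : P) : Prop := le a b /\ le b a.

Definition tau {P : Type} (mu : P -> P -> P) (gamma : P -> P) (a b : P) : P :=
  gamma (mu (gamma a) (gamma b)).

Definition left_identity {P : Type} (le : P -> P -> Prop) (m : P -> P -> P) (e : P) : Prop :=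
  forall a, equiv le (m e a) a.
Definition right_identity {P : Type} (le : P -> P -> Prop) (m : P -> P -> P) (e : P) : Prop :=
  forall a, equiv le (m a e) a.
Definition two_sided_identity {P : Type} (le : P -> P -> Prop) (m : P -> P -> P) (e : P) : Prop :=
  forall a, equiv le (m e a) a /\ equiv le a (m a e).

(* A one-sided identity e of mu is two-sided: plugging e into the heap axioms
   (A2a), (A2b) and cancelling the occurrences of mu(e, _) bounds mu(a, e) by a
   from both sides; the right-handed case is the left-handed one for the
   opposite multiplication, which again forms a preordered heap.  Since gamma
   is an order-reversing involution with gamma (mu a b) = tau (gamma a) (gamma b),
   identities of tau are exactly the images under gamma of identities of mu. *)

From Stdlib Require Import Setoid.

Arguments ph_refl {P le mu gamma} _ _.
Arguments ph_trans {P le mu gamma} _ _ _ _ _ _.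
Arguments ph_mu_mono {P le mu gamma} _ _ _ _ _ _ _.
Arguments ph_gamma_anti {P le mu gamma} _ _ _ _.
Arguments ph_A1 {P le mu gamma} _ _.
Arguments ph_A2a {P le mu gamma} _ _ _.
Arguments ph_A2b {P le mu gamma} _ _ _.

Lemma equiv_sym {P : Type} (le : P -> P -> Prop) (a b : P) :
  equiv le a b -> equiv le b a.
Proof. intros [Hab Hba]; split; assumption. Qed.

Section Involution.

Context {P : Type} {le : P -> P -> Prop} {gamma : P -> P}.
Hypothesis gamma_invol : forall a, gamma (gamma a) = a.
Hypothesis gamma_anti : forall a b, le a b -> le (gamma b) (gamma a).

Lemma le_gamma (a b : P) : le (gamma a) (gamma b) <-> le b a.
Proof.
  split; [|apply gamma_anti].
  intros Hab; apply gamma_anti in Hab; rewrite !gamma_invol in Hab; exact Hab.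
Qed.

Lemma equiv_gamma (a b : P) : equiv le (gamma a) (gamma b) <-> equiv le b a.
Proof. unfold equiv; rewrite !le_gamma; tauto. Qed.

Variable mu : P -> P -> P.

Lemma tau_gamma (a b : P) : tau mu gamma (gamma a) (gamma b) = gamma (mu a b).
Proof. unfold tau; rewrite !gamma_invol; reflexivity. Qed.

Lemma left_identity_tau (e : P) :
  left_identity le (tau mu gamma) e <-> left_identity le mu (gamma e).
Proof.
  split; intros L a.
  - specialize (L (gamma a)); rewrite <- (gamma_invol e), tau_gamma, equiv_gamma in L.
    apply equiv_sym, L.
  - rewrite <- (gamma_invol a), <- (gamma_invol e), tau_gamma, equiv_gamma.
    apply equiv_sym, L.
Qed.

Lemma right_identity_tau (e : P) :
  right_identity le (tau mu gamma) e <-> right_identity le mu (gamma e).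
Proof.
  split; intros R a.
  - specialize (R (gamma a)); rewrite <- (gamma_invol e), tau_gamma, equiv_gamma in R.
    apply equiv_sym, R.
  - rewrite <- (gamma_invol a), <- (gamma_invol e), tau_gamma, equiv_gamma.
    apply equiv_sym, R.
Qed.

Lemma two_sided_identity_tau (e : P) :
  two_sided_identity le mu e -> two_sided_identity le (tau mu gamma) (gamma e).
Proof.
  intros T a; rewrite <- (gamma_invol a), !tau_gamma, !equiv_gamma.
  destruct (T (gamma a)) as [Tl Tr]; split; apply equiv_sym; assumption.
Qed.

End Involution.

Section Heap.

Context {P : Type} {le : P -> P -> Prop} {mu : P -> P -> P} {gamma : P -> P}.

Lemma preordered_heap_op :
  preordered_heap P le mu gamma -> preordered_heap P le (fun a b => mu b a) gamma.
Proof.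
  intros []; constructor; auto.
Qed.

Hypothesis H : preordered_heap P le mu gamma.

Lemma left_identity_two_sided (e : P) :
  left_identity le mu e -> two_sided_identity le mu e.
Proof.
  intros L a; split; [apply L|split].
  - apply (le_gamma (ph_A1 H) (ph_gamma_anti H)).
    apply (ph_trans H _ (mu e (gamma (mu a e)))); [apply L|].
    rewrite <- (ph_A1 H a) at 1; apply (ph_A2a H).
  - assert (Ha : le a (gamma (mu e (gamma a)))).
    { rewrite <- (ph_A1 H a) at 1; apply (ph_gamma_anti H), L. }
    apply (ph_trans H _ (mu (gamma (mu e (gamma a))) e)).
    + apply (ph_mu_mono H); [exact Ha|apply (ph_refl H)].
    + apply (ph_A2b H).
Qed.

End Heap.

Lemma right_identity_two_sided {P : Type} {le : P -> P -> Prop} {mu : P -> P -> P}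
  {gamma : P -> P} (H : preordered_heap P le mu gamma) (e : P) :
  right_identity le mu e -> two_sided_identity le mu e.
Proof.
  intros R a.
  destruct (left_identity_two_sided (preordered_heap_op H) e R a) as [Rl Rr].
  split; apply equiv_sym; assumption.
Qed.

Lemma one_sided_identity_two_sided {P : Type} {le : P -> P -> Prop} {mu : P -> P -> P}
  {gamma : P -> P} (H : preordered_heap P le mu gamma) (e : P) :
  left_identity le mu e \/ right_identity le mu e -> two_sided_identity le mu e.
Proof.
  intros [L|R]; [exact (left_identity_two_sided H e L)|exact (right_identity_two_sided H e R)].
Qed.

Theorem corollary2 (P : Type) (le : P -> P -> Prop) (mu : P -> P -> P) (gamma : P -> P)
  (H : preordered_heap P le mu gamma) (e : P) :
  ((left_identity le mu e \/ right_identity le mu e) ->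
     two_sided_identity le mu e /\ two_sided_identity le (tau mu gamma) (gamma e)) /\
  ((left_identity le (tau mu gamma) e \/ right_identity le (tau mu gamma) e) ->
     two_sided_identity le (tau mu gamma) e /\ two_sided_identity le mu (gamma e)).
Proof.
  pose proof (ph_A1 H) as gamma_invol; pose proof (ph_gamma_anti H) as gamma_anti.
  split; intros One_sided.
  - assert (T : two_sided_identity le mu e) by exact (one_sided_identity_two_sided H e One_sided).
    split; [exact T|exact (two_sided_identity_tau gamma_invol gamma_anti mu e T)].
  - rewrite (left_identity_tau gamma_invol gamma_anti),
      (right_identity_tau gamma_invol gamma_anti) in One_sided.
    assert (T : two_sided_identity le mu (gamma e))
      by exact (one_sided_identity_two_sided H (gamma e) One_sided).
    split; [|exact T].
    rewrite <- (gamma_invol e); exact (two_sided_identity_tau gamma_invol gamma_anti mu _ T).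
Qed.
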